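(* Suppose that $2\le n_0<\infty$ and that $S$ is submultiplicative on $[1,n_0]$. Then for every $M>0$ there exist $N_0>n_0$ and an extension of $S$ to $[1,N_0]$ which is submultiplicative on $[1,N_0]$ and satisfies $S(N_0)>M$.
   Context: Let $2\le n_0\le\infty$ and let $S$ be a real-valued function on $[1,n_0]$ (on $[1,\infty)$ if $n_0=\infty$). $S$ is called submultiplicative on $[1,n_0]$ if: (a) $S$ is piecewise-linear, continuous, strictly increasing and concave; (b) $S(x)=x$ for $1\le x\le 2$; (c) $S(xy)\le S(x)S(y)$ for all $x,y$ with $1\le x,y,xy\le n_0$. *)

From Stdlib Require Import Reals.
Open Scope R_scope.

Definition piecewise_linear_on (a b : R) (f : R -> R) : Prop :=
  exists (n : nat) (t : nat -> R),
    t 0%nat = a /\ t n = b /\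
    (forall i : nat, (i < n)%nat -> t i < t (S i)) /\
    (forall i : nat, (i < n)%nat ->
       exists c d : R, forall x, t i <= x <= t (S i) -> f x = c * x + d).

Definition continuous_on (a b : R) (f : R -> R) : Prop :=
  forall x, a <= x <= b -> forall eps, 0 < eps ->
    exists delta, 0 < delta /\
      forall y, a <= y <= b -> Rabs (y - x) < delta -> Rabs (f y - f x) < eps.

Definition strictly_increasing_on (a b : R) (f : R -> R) : Prop :=
  forall x y, a <= x <= b -> a <= y <= b -> x < y -> f x < f y.

Definition concave_on (a b : R) (f : R -> R) : Prop :=
  forall x y t, a <= x <= b -> a <= y <= b -> 0 <= t <= 1 ->
    t * f x + (1 - t) * f y <= f (t * x + (1 - t) * y).

Definition submultiplicative_on (n0 : R) (S : R -> R) : Prop :=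
  piecewise_linear_on 1 n0 S /\
  continuous_on 1 n0 S /\
  strictly_increasing_on 1 n0 S /\
  concave_on 1 n0 S /\
  (forall x, 1 <= x <= 2 -> S x = x) /\
  (forall x y, 1 <= x -> 1 <= y -> x * y <= n0 -> S (x * y) <= S x * S y).

From Stdlib Require Import Reals Lra Lia Psatz.
Open Scope R_scope.

(* Beyond [n0], continue [S] by the minimum of the lines [z |-> A q^k + e^k z], [k >= 1],
   with [q = 3/2], a small slope [e] and [A] chosen so that the first line passes through
   [(n0, S n0)].  Because [A >= 1], the product of the lines of index [i] and [j] dominates
   the line of index [i + j], which gives submultiplicativity beyond [n0]; a product with a
   factor [x <= n0] is handled by passing from index [k] to [k + 1], paid for by
   [S x >= max (q, e x)].  Only finitely many lines matter on a bounded interval, so the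
   extension stays piecewise linear, and at a point [N] far out every line exceeds [M],
   through [A q^k] or through [e^k N]. *)

Inductive pw_affine : R -> R -> (R -> R) -> Prop :=
| pw_affine_one a b f c d :
    a < b -> (forall x, a <= x <= b -> f x = c * x + d) -> pw_affine a b f
| pw_affine_cat a b e f : pw_affine a b f -> pw_affine b e f -> pw_affine a e f.

Lemma pw_affine_lt a b f : pw_affine a b f -> a < b.
Proof. induction 1; lra. Qed.

Lemma pw_affine_ext a b f g :
  pw_affine a b f -> (forall x, a <= x <= b -> f x = g x) -> pw_affine a b g.
Proof.
  intros H; revert g.
  induction H as [a b f c d Hab Hf|a b e f H1 IH1 H2 IH2]; intros g Hfg.
  - apply pw_affine_one with c d; [exact Hab|].
    intros x Hx. rewrite <- Hfg by exact Hx. auto.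
  - pose proof (pw_affine_lt _ _ _ H1). pose proof (pw_affine_lt _ _ _ H2).
    apply pw_affine_cat with b; [apply IH1 | apply IH2]; intros x Hx; apply Hfg; lra.
Qed.

Lemma pw_affine_last a b f : pw_affine a b f ->
  exists p c d, a <= p < b /\ forall x, p <= x <= b -> f x = c * x + d.
Proof.
  induction 1 as [a b f c d Hab Hf|a b e f H1 _ _ IH2].
  - exists a, c, d. split; [lra | exact Hf].
  - pose proof (pw_affine_lt _ _ _ H1).
    destruct IH2 as [p [c [d [Hp Hf]]]]. exists p, c, d. split; [lra | exact Hf].
Qed.

Lemma pw_affine_of_partition a f n (t : nat -> R) :
  (1 <= n)%nat -> t 0%nat = a ->
  (forall i, (i < n)%nat -> t i < t (S i)) ->
  (forall i, (i < n)%nat -> exists c d, forall x, t i <= x <= t (S i) -> f x = c * x + d) ->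
  pw_affine a (t n) f.
Proof.
  intros Hn Ht0 Hinc Haff. induction n as [|n IH]; [lia|].
  destruct (Haff n ltac:(lia)) as [c [d Hcd]].
  assert (Hpiece : pw_affine (t n) (t (S n)) f).
  { apply pw_affine_one with c d; [apply Hinc; lia | exact Hcd]. }
  destruct n as [|n].
  - rewrite <- Ht0. exact Hpiece.
  - apply pw_affine_cat with (t (S n)); [|exact Hpiece].
    apply IH; [lia | |]; intros i Hi; [apply Hinc | apply Haff]; lia.
Qed.

Lemma pw_affine_of_piecewise_linear a b f :
  a < b -> piecewise_linear_on a b f -> pw_affine a b f.
Proof.
  intros Hab [n [t [Ht0 [Htn [Hinc Haff]]]]].
  destruct n as [|n]; [lra|].
  rewrite <- Htn. apply pw_affine_of_partition; auto; lia.
Qed.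

Lemma piecewise_linear_of_pw_affine a b f : pw_affine a b f -> piecewise_linear_on a b f.
Proof.
  induction 1 as [a b f c d Hab Hf|a b e f _ IH1 _ IH2].
  - exists 1%nat, (fun i => match i with 0%nat => a | _ => b end).
    repeat split; auto.
    + intros i Hi. destruct i; [lra|lia].
    + intros i Hi. destruct i; [|lia]. exists c, d. exact Hf.
  - destruct IH1 as [n1 [t1 [A1 [B1 [C1 D1]]]]].
    destruct IH2 as [n2 [t2 [A2 [B2 [C2 D2]]]]].
    set (t := fun i => if Nat.leb i n1 then t1 i else t2 (i - n1)%nat).
    assert (Hlo : forall i, (i <= n1)%nat -> t i = t1 i).
    { intros i Hi. unfold t. now rewrite (proj2 (Nat.leb_le _ _) Hi). }
    assert (Hhi : forall i, (n1 <= i)%nat -> t i = t2 (i - n1)%nat).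
    { intros i Hi. unfold t. destruct (Nat.leb i n1) eqn:E; [|reflexivity].
      apply Nat.leb_le in E. replace i with n1 by lia. now rewrite Nat.sub_diag, A2. }
    assert (Hstep : forall i, (i < n1 + n2)%nat ->
      (t i = t1 i /\ t (S i) = t1 (S i) /\ (i < n1)%nat) \/
      (t i = t2 (i - n1)%nat /\ t (S i) = t2 (S (i - n1)) /\ (i - n1 < n2)%nat)).
    { intros i Hi. destruct (Nat.lt_ge_cases i n1).
      - left. rewrite !Hlo by lia. auto.
      - right. rewrite !Hhi by lia. replace (S i - n1)%nat with (S (i - n1)) by lia.
        repeat split; lia. }
    exists (n1 + n2)%nat, t. split; [|split; [|split]].
    + rewrite Hlo by lia. exact A1.
    + rewrite Hhi by lia. now replace (n1 + n2 - n1)%nat with n2 by lia.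
    + intros i Hi. destruct (Hstep i Hi) as [[-> [-> ?]]|[-> [-> ?]]]; auto.
    + intros i Hi. destruct (Hstep i Hi) as [[-> [-> ?]]|[-> [-> ?]]]; auto.
Qed.

Lemma pw_affine_min_affine a b c1 d1 c d : a < b ->
  pw_affine a b (fun x => Rmin (c1 * x + d1) (c * x + d)).
Proof.
  intro Hab.
  destruct (Req_dec c1 c) as [Ec|Ec].
  { subst c1. destruct (Rle_dec d1 d).
    - apply pw_affine_one with c d1; [exact Hab|]. intros x _. apply Rmin_left. lra.
    - apply pw_affine_one with c d; [exact Hab|]. intros x _. apply Rmin_right. lra. }
  set (z := (d - d1) / (c1 - c)).
  assert (Hz : forall x, (c1 * x + d1) - (c * x + d) = (c1 - c) * (x - z)).
  { intro x. unfold z. field. lra. }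
  assert (Hleft : forall u v, u < v -> (forall x, u <= x <= v -> (c1 - c) * (x - z) <= 0) ->
            pw_affine u v (fun x => Rmin (c1 * x + d1) (c * x + d))).
  { intros u v Huv H. apply pw_affine_one with c1 d1; [exact Huv|].
    intros x Hx. apply Rmin_left. specialize (H x Hx). rewrite <- Hz in H. lra. }
  assert (Hright : forall u v, u < v -> (forall x, u <= x <= v -> 0 <= (c1 - c) * (x - z)) ->
            pw_affine u v (fun x => Rmin (c1 * x + d1) (c * x + d))).
  { intros u v Huv H. apply pw_affine_one with c d; [exact Huv|].
    intros x Hx. apply Rmin_right. specialize (H x Hx). rewrite <- Hz in H. lra. }
  destruct (Rle_dec z a); [|destruct (Rle_dec b z)].
  - destruct (Rlt_dec c1 c); [apply Hleft|apply Hright]; auto; intros; nra.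
  - destruct (Rlt_dec c1 c); [apply Hright|apply Hleft]; auto; intros; nra.
  - apply pw_affine_cat with z.
    + destruct (Rlt_dec c1 c); [apply Hright|apply Hleft]; try lra; intros; nra.
    + destruct (Rlt_dec c1 c); [apply Hleft|apply Hright]; try lra; intros; nra.
Qed.

Lemma pw_affine_min a b f c d :
  pw_affine a b f -> pw_affine a b (fun x => Rmin (f x) (c * x + d)).
Proof.
  induction 1 as [a b f c1 d1 Hab Hf|a b e f _ IH1 _ IH2].
  - apply pw_affine_ext with (fun x => Rmin (c1 * x + d1) (c * x + d)).
    + now apply pw_affine_min_affine.
    + intros x Hx. now rewrite Hf.
  - now apply pw_affine_cat with b.
Qed.

Lemma continuous_on_ext a b f g :
  continuous_on a b f -> (forall x, a <= x <= b -> f x = g x) -> continuous_on a b g.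
Proof.
  intros Hf Hfg x Hx eps Heps. destruct (Hf x Hx eps Heps) as [d [Hd K]].
  exists d. split; [exact Hd|]. intros y Hy Hyx. rewrite <- !Hfg by assumption. auto.
Qed.

Lemma concave_on_ext a b f g :
  concave_on a b f -> (forall x, a <= x <= b -> f x = g x) -> concave_on a b g.
Proof.
  intros Hf Hfg x y t Hx Hy Ht.
  assert (a <= t * x + (1 - t) * y <= b) by (split; nra).
  rewrite <- !Hfg by assumption. auto.
Qed.

Lemma strictly_increasing_on_ext a b f g :
  strictly_increasing_on a b f -> (forall x, a <= x <= b -> f x = g x) ->
  strictly_increasing_on a b g.
Proof. intros Hf Hfg x y Hx Hy Hxy. rewrite <- !Hfg by assumption. auto. Qed.

Lemma continuous_on_of_lipschitz a b f :
  (forall x y, Rabs (f y - f x) <= Rabs (y - x)) -> continuous_on a b f.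
Proof.
  intros Hf x _ eps Heps. exists eps. split; [exact Heps|].
  intros y _ Hyx. specialize (Hf x y). lra.
Qed.

(* [h z = h (min z m) + h (max z m) - h m] reduces continuity on [a,b] to continuity of
   the two clamped pieces. *)
Lemma continuous_on_glue a m b h : a <= m <= b ->
  continuous_on a m h -> continuous_on m b h -> continuous_on a b h.
Proof.
  intros Hm Hl Hr x Hx eps Heps.
  assert (Hsplit : forall z, h z = h (Rmin z m) + h (Rmax z m) - h m).
  { intro z. unfold Rmin, Rmax. destruct (Rle_dec z m); ring. }
  assert (Hmin : forall y, Rabs (Rmin y m - Rmin x m) <= Rabs (y - x)).
  { intro y. unfold Rmin. destruct (Rle_dec y m), (Rle_dec x m); split_Rabs; lra. }
  assert (Hmax : forall y, Rabs (Rmax y m - Rmax x m) <= Rabs (y - x)).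
  { intro y. unfold Rmax. destruct (Rle_dec y m), (Rle_dec x m); split_Rabs; lra. }
  assert (Hrange : forall z, a <= z <= b -> a <= Rmin z m <= m /\ m <= Rmax z m <= b).
  { intros z Hz. unfold Rmin, Rmax. destruct (Rle_dec z m); lra. }
  destruct (Hrange x Hx) as [Hxl Hxr].
  destruct (Hl (Rmin x m) Hxl (eps / 2) ltac:(lra)) as [d1 [Hd1 K1]].
  destruct (Hr (Rmax x m) Hxr (eps / 2) ltac:(lra)) as [d2 [Hd2 K2]].
  exists (Rmin d1 d2). split; [now apply Rmin_pos|].
  intros y Hy Hyx. destruct (Hrange y Hy) as [Hyl Hyr].
  pose proof (Rmin_l d1 d2). pose proof (Rmin_r d1 d2).
  specialize (K1 (Rmin y m) Hyl ltac:(specialize (Hmin y); lra)).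
  specialize (K2 (Rmax y m) Hyr ltac:(specialize (Hmax y); lra)).
  rewrite (Hsplit y), (Hsplit x). split_Rabs; lra.
Qed.

Lemma strictly_increasing_on_glue a m b h :
  strictly_increasing_on a m h -> strictly_increasing_on m b h ->
  strictly_increasing_on a b h.
Proof.
  intros Hl Hr x y Hx Hy Hxy.
  destruct (Rle_dec y m); [apply Hl; lra|].
  destruct (Rle_dec m x); [apply Hr; lra|].
  pose proof (Hl x m ltac:(lra) ltac:(lra) ltac:(lra)).
  pose proof (Hr m y ltac:(lra) ltac:(lra) ltac:(lra)). lra.
Qed.

Lemma concave_three_point a b f u v w : concave_on a b f ->
  a <= u -> u < v -> v <= w -> w <= b ->
  (v - u) * (f w - f u) <= (f v - f u) * (w - u).
Proof.
  intros Hc Hu Huv Hvw Hw.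
  set (t := (w - v) / (w - u)).
  assert (Ht : t * (w - u) = w - v) by (unfold t; field; lra).
  assert (Htr : 0 <= t <= 1) by (split; apply (Rmult_le_reg_r (w - u)); nra).
  pose proof (Hc u w t ltac:(lra) ltac:(lra) Htr) as K.
  replace (t * u + (1 - t) * w) with v in K by nra.
  nra.
Qed.

(* Chord slopes of a concave function decrease, so they all dominate the slope [c] of the
   last affine piece. *)
Lemma concave_chord_ge_last_slope a p b c d f : concave_on a b f -> a <= p < b ->
  (forall x, p <= x <= b -> f x = c * x + d) ->
  forall u v, a <= u -> u <= v -> v <= b -> c * (v - u) <= f v - f u.
Proof.
  intros Hc Hp Hl u v Hu Huv Hv.
  destruct (Rle_dec p u); [rewrite (Hl u), (Hl v) by lra; lra|].
  destruct (Req_dec u v) as [<-|Huv']; [lra|].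
  pose proof (concave_three_point a b f u v b Hc Hu ltac:(lra) Hv ltac:(lra)) as Kuv.
  pose proof (concave_three_point a b f u p b Hc Hu ltac:(lra) ltac:(lra) ltac:(lra)) as Kup.
  rewrite (Hl p), (Hl b) in Kup by lra.
  assert (Hub : c * (b - u) <= f b - f u).
  { apply (Rmult_le_reg_l (b - p)); [lra|]. rewrite (Hl b) by lra. nra. }
  assert ((v - u) * (c * (b - u)) <= (f v - f u) * (b - u)) by nra.
  nra.
Qed.

Lemma combination_below_knot (h : R -> R) m cc u v s t :
  0 <= s <= t -> t <= 1 -> t * (u - m) + (1 - t) * (v - m) = s * (u - m) ->
  h u <= h m + cc * (u - m) -> h v <= h m + cc * (v - m) ->
  t * h u + (1 - t) * h v <= s * h u + (1 - s) * h m.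
Proof.
  intros Hst Ht1 Hcomb Hu Hv.
  assert ((t - s) * (h u - h m - cc * (u - m)) <= 0) by nra.
  assert ((1 - t) * (h v - h m - cc * (v - m)) <= 0) by nra.
  assert (Hvm : (1 - t) * (v - m) = (s - t) * (u - m)) by lra.
  assert (cc * ((1 - t) * (v - m)) = cc * ((s - t) * (u - m))) by now rewrite Hvm.
  nra.
Qed.

Lemma concave_on_glue a m b cc h : a <= m <= b ->
  concave_on a m h -> concave_on m b h ->
  (forall x, a <= x <= b -> h x <= h m + cc * (x - m)) -> concave_on a b h.
Proof.
  intros Hm Hl Hr Hline.
  assert (Hcross : forall x y t, a <= x < m -> m < y <= b -> 0 <= t <= 1 ->
            t * h x + (1 - t) * h y <= h (t * x + (1 - t) * y)).
  { intros x y t Hx Hy Ht. set (z := t * x + (1 - t) * y).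
    assert (Hz : x <= z <= y) by (unfold z; split; nra).
    destruct (Rle_dec z m).
    - set (s := (m - z) / (m - x)).
      assert (Hs : s * (m - x) = m - z) by (unfold s; field; lra).
      assert (Hsr : 0 <= s <= 1) by (split; apply (Rmult_le_reg_r (m - x)); nra).
      pose proof (Hl x m s ltac:(lra) ltac:(lra) Hsr) as K.
      replace (s * x + (1 - s) * m) with z in K by lra.
      enough (t * h x + (1 - t) * h y <= s * h x + (1 - s) * h m) by lra.
      apply combination_below_knot with cc; try apply Hline; unfold z in *; try lra; nra.
    - set (s := (z - m) / (y - m)).
      assert (Hs : s * (y - m) = z - m) by (unfold s; field; lra).
      assert (Hsr : 0 <= s <= 1) by (split; apply (Rmult_le_reg_r (y - m)); nra).
      pose proof (Hr y m s ltac:(lra) ltac:(lra) Hsr) as K.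
      replace (s * y + (1 - s) * m) with z in K by lra.
      enough ((1 - t) * h y + (1 - (1 - t)) * h x <= s * h y + (1 - s) * h m) by lra.
      apply combination_below_knot with cc; try apply Hline; unfold z in *; try lra; nra. }
  intros x y t Hx Hy Ht.
  destruct (Rle_dec x m), (Rle_dec y m).
  - apply Hl; lra.
  - destruct (Req_dec x m) as [->|]; [apply Hr; lra | apply Hcross; lra].
  - destruct (Req_dec y m) as [->|]; [apply Hr; lra|].
    replace (t * x + (1 - t) * y) with ((1 - t) * y + (1 - (1 - t)) * x) by ring.
    pose proof (Hcross y x (1 - t) ltac:(lra) ltac:(lra) ltac:(lra)). lra.
  - apply Hr; lra.
Qed.

Lemma pow_le_pow_le_1 (e : R) (k m : nat) : 0 <= e <= 1 -> (k <= m)%nat -> e ^ m <= e ^ k.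
Proof.
  intros He Hkm. replace m with (k + (m - k))%nat by lia. rewrite pow_add.
  pose proof (pow_le e k ltac:(lra)).
  assert (e ^ (m - k) <= 1) by (rewrite <- (pow1 (m - k)); apply pow_incr; lra).
  nra.
Qed.

Section Envelope.

Variables A q e : R.

Definition power_line (k : nat) (z : R) : R := A * q ^ k + e ^ k * z.

(* [power_envelope K z] is the minimum of [power_line k z] over [1 <= k <= K + 1]. *)
Fixpoint power_envelope (K : nat) (z : R) : R :=
  match K with
  | O => power_line 1 z
  | S K' => Rmin (power_envelope K' z) (power_line (K' + 2) z)
  end.

Lemma power_envelope_attained K z :
  exists k, (1 <= k <= K + 1)%nat /\ power_envelope K z = power_line k z.
Proof.
  induction K as [|K [k [Hk E]]]; simpl.
  - exists 1%nat. split; [lia | reflexivity].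
  - unfold Rmin. destruct (Rle_dec (power_envelope K z) (power_line (K + 2) z)).
    + exists k. split; [lia | exact E].
    + exists (K + 2)%nat. split; [lia | reflexivity].
Qed.

Lemma power_envelope_le K z k :
  (1 <= k <= K + 1)%nat -> power_envelope K z <= power_line k z.
Proof.
  induction K as [|K IH]; intros Hk; simpl.
  - replace k with 1%nat by lia. lra.
  - destruct (Nat.eq_dec k (K + 2)) as [->|Hk2]; [apply Rmin_r|].
    eapply Rle_trans; [apply Rmin_l | apply IH; lia].
Qed.

Lemma power_envelope_pw_affine K a b : a < b -> pw_affine a b (power_envelope K).
Proof.
  intro Hab. induction K as [|K IH]; simpl.
  - apply pw_affine_one with (e ^ 1) (A * q ^ 1); [exact Hab|].
    intros x _. unfold power_line. ring.
  - apply pw_affine_ext with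
      (fun x => Rmin (power_envelope K x) (e ^ (K + 2) * x + A * q ^ (K + 2))).
    + now apply pw_affine_min.
    + intros x _. unfold power_line. f_equal. ring.
Qed.

Lemma power_envelope_concave K a b : concave_on a b (power_envelope K).
Proof.
  intros x y t _ _ Ht.
  destruct (power_envelope_attained K (t * x + (1 - t) * y)) as [k [Hk ->]].
  pose proof (power_envelope_le K x k Hk). pose proof (power_envelope_le K y k Hk).
  unfold power_line in *.
  assert (t * power_envelope K x <= t * (A * q ^ k + e ^ k * x)) by (apply Rmult_le_compat_l; lra).
  assert ((1 - t) * power_envelope K y <= (1 - t) * (A * q ^ k + e ^ k * y))
    by (apply Rmult_le_compat_l; lra).
  nra.
Qed.

Lemma power_envelope_lipschitz K x y : 0 <= e <= 1 ->
  Rabs (power_envelope K y - power_envelope K x) <= Rabs (y - x).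
Proof.
  intro He.
  destruct (power_envelope_attained K x) as [i [Hi Ex]].
  destruct (power_envelope_attained K y) as [j [Hj Ey]].
  pose proof (power_envelope_le K y i Hi). pose proof (power_envelope_le K x j Hj).
  pose proof (pow_le e i ltac:(lra)). pose proof (pow_le e j ltac:(lra)).
  pose proof (pow_le_pow_le_1 e 0 i He ltac:(lia)).
  pose proof (pow_le_pow_le_1 e 0 j He ltac:(lia)).
  unfold power_line in *. simpl in *. split_Rabs; nra.
Qed.

Lemma power_envelope_increasing K x y : 0 < e -> x < y ->
  power_envelope K x < power_envelope K y.
Proof.
  intros He Hxy. destruct (power_envelope_attained K y) as [k [Hk ->]].
  pose proof (power_envelope_le K x k Hk). pose proof (pow_lt e k He).
  unfold power_line in *. nra.
Qed.

Hypotheses (HA : 0 <= A) (Hq : 1 <= q) (He : 0 <= e).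

Lemma power_envelope_eq_first_line K z : 0 <= z -> e * z <= A * q * (q - 1) ->
  power_envelope K z = power_line 1 z.
Proof.
  intros Hz Hez. destruct (power_envelope_attained K z) as [k [Hk E]].
  apply Rle_antisym; [apply power_envelope_le; lia|].
  rewrite E. destruct (Nat.eq_dec k 1) as [->|Hk1]; [lra|].
  assert (q ^ 2 <= q ^ k) by (apply Rle_pow; [lra | lia]).
  pose proof (pow_le e k He).
  unfold power_line. simpl in *. nra.
Qed.

Lemma power_envelope_gt K M z k0 : 0 <= z -> e <= 1 ->
  M < A * q ^ k0 -> M < e ^ k0 * z -> M < power_envelope K z.
Proof.
  intros Hz He1 HMq HMe. destruct (power_envelope_attained K z) as [k [_ ->]].
  unfold power_line. pose proof (pow_le e k He). pose proof (pow_le q k ltac:(lra)).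
  destruct (Nat.le_gt_cases k0 k).
  - assert (q ^ k0 <= q ^ k) by (apply Rle_pow; [lra | auto]). nra.
  - assert (e ^ k0 <= e ^ k) by (apply pow_le_pow_le_1; [lra | lia]). nra.
Qed.

Variables (K : nat) (N : R).
Hypothesis Hcap : power_line 1 N <= A * q ^ (K + 1).

(* Lines of index beyond [K + 1] lie above [power_line 1] on [0, N], so the truncated
   minimum is below all of them. *)
Lemma power_envelope_le_all k z : (1 <= k)%nat -> 0 <= z <= N ->
  power_envelope K z <= power_line k z.
Proof.
  intros Hk Hz. destruct (Nat.le_gt_cases k (K + 1)); [apply power_envelope_le; lia|].
  assert (q ^ (K + 1) <= q ^ k) by (apply Rle_pow; [lra | lia]).
  pose proof (power_envelope_le K z 1 ltac:(lia)). pose proof (pow_le e k He).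
  unfold power_line in *. simpl in *. nra.
Qed.

Lemma power_envelope_mul_le x y : 1 <= A -> 0 <= x -> 0 <= y -> x * y <= N ->
  power_envelope K (x * y) <= power_envelope K x * power_envelope K y.
Proof.
  intros HA1 Hx Hy Hxy.
  destruct (power_envelope_attained K x) as [i [Hi ->]].
  destruct (power_envelope_attained K y) as [j [Hj ->]].
  eapply Rle_trans; [apply (power_envelope_le_all (i + j)); [lia | nra]|].
  unfold power_line. rewrite !pow_add.
  pose proof (pow_le q i ltac:(lra)). pose proof (pow_le q j ltac:(lra)).
  pose proof (pow_le e i He). pose proof (pow_le e j He).
  assert (0 <= q ^ i * q ^ j) by nra.
  assert (A * (q ^ i * q ^ j) <= A * A * (q ^ i * q ^ j)) by (apply Rmult_le_compat_r; nra).
  assert (0 <= A * q ^ i * (e ^ j * y)) by (apply Rmult_le_pos; nra).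
  assert (0 <= e ^ i * x * (A * q ^ j)) by (apply Rmult_le_pos; nra).
  nra.
Qed.

Lemma power_envelope_mul_le_left x y : 1 <= x -> 0 <= y -> x * y <= N ->
  power_envelope K (x * y) <= x * power_envelope K y.
Proof.
  intros Hx Hy Hxy. destruct (power_envelope_attained K y) as [k [Hk ->]].
  eapply Rle_trans; [apply (power_envelope_le_all k); [lia | nra]|].
  unfold power_line. pose proof (pow_le q k ltac:(lra)).
  assert (0 <= A * q ^ k) by nra. nra.
Qed.

(* Compares with the line of index [k + 1]: [s] absorbs one more factor [q] and one more
   factor [e]. *)
Lemma power_envelope_mul_le_shift s x y : q <= s -> e * x <= s -> 0 <= x -> 0 <= y ->
  x * y <= N -> power_envelope K (x * y) <= s * power_envelope K y.
Proof.
  intros Hqs Hes Hx Hy Hxy. destruct (power_envelope_attained K y) as [k [Hk ->]].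
  eapply Rle_trans; [apply (power_envelope_le_all (S k)); [lia | nra]|].
  unfold power_line. simpl.
  pose proof (pow_le q k ltac:(lra)). pose proof (pow_le e k He).
  assert (0 <= A * q ^ k) by nra. assert (0 <= e ^ k * y) by nra.
  assert (q * (A * q ^ k) <= s * (A * q ^ k)) by nra.
  assert (e * x * (e ^ k * y) <= s * (e ^ k * y)) by nra.
  nra.
Qed.

End Envelope.

Lemma pow_unbounded (q B : R) : 1 < q -> exists n, B <= q ^ n.
Proof.
  intro Hq. destruct (Pow_x_infinity q ltac:(rewrite Rabs_right; lra) B) as [n Hn].
  exists n. specialize (Hn n (le_n n)).
  rewrite Rabs_right in Hn by (apply Rle_ge, pow_le; lra). lra.
Qed.

Section Extension.

Variables (n0 c : R) (S : R -> R).
Hypotheses (Hn0 : 2 <= n0) (HS : submultiplicative_on n0 S) (Hc : 0 < c)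
  (Hchord : forall u v, 1 <= u -> u <= v -> v <= n0 -> c * (v - u) <= S v - S u).

Let e := Rmin c (1 / 2) / n0.
Let q := 3 / 2.
Let A := (S n0 - e * n0) / q.

Lemma slope_bounds : 0 < e /\ e * n0 <= c /\ e * n0 <= 1 / 2.
Proof.
  pose proof (Rmin_l c (1 / 2)). pose proof (Rmin_r c (1 / 2)).
  assert (0 < Rmin c (1 / 2)) by (apply Rmin_pos; lra).
  assert (He : e * n0 = Rmin c (1 / 2)) by (unfold e; field; lra).
  split; [unfold e; apply Rdiv_lt_0_compat; lra | lra].
Qed.

Lemma S_ge_of_le u x : 1 <= u <= 2 -> u <= x <= n0 -> u <= S x.
Proof.
  destruct HS as [_ [_ [Hinc [_ [Hid _]]]]]. intros Hu Hx.
  rewrite <- (Hid u Hu) at 1. destruct (Req_dec u x) as [->|]; [lra|].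
  left. apply Hinc; lra.
Qed.

Lemma intercept_ge_1 : 1 <= A.
Proof.
  pose proof slope_bounds. pose proof (S_ge_of_le 2 n0 ltac:(lra) ltac:(lra)).
  unfold A, q. apply (Rmult_le_reg_r (3 / 2)); [lra|]. field_simplify; lra.
Qed.

Let HA0 : 0 <= A. Proof. pose proof intercept_ge_1. lra. Qed.
Let Hq1 : 1 <= q. Proof. unfold q. lra. Qed.
Let He0 : 0 <= e. Proof. pose proof slope_bounds. lra. Qed.

Lemma first_line_eq z : power_line A q e 1 z = S n0 + e * (z - n0).
Proof. unfold power_line, A, q. field. Qed.

Definition extension (K : nat) (x : R) : R :=
  if Rle_dec x n0 then S x else power_envelope A q e K x.

Lemma extension_left K x : x <= n0 -> extension K x = S x.
Proof. intro Hx. unfold extension. now destruct (Rle_dec x n0). Qed.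

Lemma extension_right K x : n0 <= x -> extension K x = power_envelope A q e K x.
Proof.
  intro Hx. unfold extension. destruct (Rle_dec x n0); [|reflexivity].
  replace x with n0 by lra.
  pose proof slope_bounds. pose proof intercept_ge_1.
  pose proof (S_ge_of_le 2 n0 ltac:(lra) ltac:(lra)).
  assert (HAq : A * q * (q - 1) = (S n0 - e * n0) / 2) by (unfold A, q; field).
  rewrite power_envelope_eq_first_line, first_line_eq; unfold q in *; lra.
Qed.

Section Truncation.

Variables (K : nat) (N : R).
Hypotheses (HN : n0 < N) (Hcap : power_line A q e 1 N <= A * q ^ (K + 1)).

Let envelope_le_all k z : (1 <= k)%nat -> 0 <= z <= N ->
  power_envelope A q e K z <= power_line A q e k z.
Proof.
  exact (power_envelope_le_all A q e HA0 Hq1 He0 K N Hcap k z).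
Qed.

(* With [n0 / y <= x], submultiplicativity of [S] at [(n0 / y, y)] plus the chord bound
   from [n0 / y] to [x] beats the slope [e] of the first line. *)
Lemma extension_mul_crossing x y : 1 <= x <= n0 -> 1 <= y <= n0 -> n0 < x * y <= N ->
  extension K (x * y) <= extension K x * extension K y.
Proof.
  intros Hx Hy Hxy. destruct HS as [_ [_ [_ [_ [_ Hsub]]]]]. pose proof slope_bounds.
  rewrite (extension_left K x), (extension_left K y), extension_right by lra.
  pose proof (envelope_le_all 1 (x * y) ltac:(lia) ltac:(nra)) as Henv.
  rewrite first_line_eq in Henv.
  set (x' := n0 / y).
  assert (Hx'y : x' * y = n0) by (unfold x'; field; lra).
  assert (1 <= x') by (apply (Rmult_le_reg_r y); lra).
  assert (x' < x) by (apply (Rmult_lt_reg_r y); lra).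
  pose proof (Hsub x' y ltac:(lra) ltac:(lra) ltac:(lra)) as Hs. rewrite Hx'y in Hs.
  pose proof (Hchord x' x ltac:(lra) ltac:(lra) ltac:(lra)).
  pose proof (S_ge_of_le 1 y ltac:(lra) ltac:(lra)).
  assert (e * y <= c * S y) by nra.
  assert ((S x' + c * (x - x')) * S y <= S x * S y) by (apply Rmult_le_compat_r; lra).
  assert ((x - x') * (e * y) <= (x - x') * (c * S y)) by (apply Rmult_le_compat_l; lra).
  nra.
Qed.

Lemma extension_mul_mixed x y : 1 <= x <= n0 -> n0 < y -> x * y <= N ->
  extension K (x * y) <= extension K x * extension K y.
Proof.
  intros Hx Hy Hxy. pose proof slope_bounds. pose proof intercept_ge_1.
  rewrite (extension_left K x), !extension_right by nra.
  destruct (Rle_dec x 2).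
  - destruct HS as [_ [_ [_ [_ [Hid _]]]]]. rewrite Hid by lra.
    apply (power_envelope_mul_le_left A q e HA0 Hq1 He0 K N Hcap); unfold q; lra.
  - pose proof (S_ge_of_le 2 x ltac:(lra) ltac:(lra)).
    apply (power_envelope_mul_le_shift A q e HA0 Hq1 He0 K N Hcap); unfold q; nra.
Qed.

Lemma extension_mul x y : 1 <= x -> 1 <= y -> x * y <= N ->
  extension K (x * y) <= extension K x * extension K y.
Proof.
  intros Hx Hy Hxy. destruct (Rle_dec x n0), (Rle_dec y n0).
  - destruct (Rle_dec (x * y) n0).
    + destruct HS as [_ [_ [_ [_ [_ Hsub]]]]].
      rewrite !extension_left by lra. auto.
    + apply extension_mul_crossing; lra.
  - apply extension_mul_mixed; lra.
  - rewrite (Rmult_comm x y), (Rmult_comm (extension K x)).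
    apply extension_mul_mixed; lra.
  - pose proof slope_bounds. pose proof intercept_ge_1.
    rewrite !extension_right by nra.
    apply (power_envelope_mul_le A q e HA0 Hq1 He0 K N Hcap); unfold q; nra.
Qed.

Lemma extension_submultiplicative : submultiplicative_on N (extension K).
Proof.
  destruct HS as [Hpl [Hcont [Hinc [Hconc [Hid _]]]]].
  destruct slope_bounds as [He [Hec Heh]].
  assert (Hleft : forall x, 1 <= x <= n0 -> S x = extension K x)
    by (intros; symmetry; apply extension_left; lra).
  assert (Hright : forall x, n0 <= x <= N -> power_envelope A q e K x = extension K x)
    by (intros; symmetry; apply extension_right; lra).
  split; [|split; [|split; [|split; [|split]]]].
  - apply piecewise_linear_of_pw_affine, pw_affine_cat with n0.
    + apply pw_affine_ext with S; [apply pw_affine_of_piecewise_linear; [lra|]|]; auto.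
    + apply pw_affine_ext with (power_envelope A q e K); auto.
      now apply power_envelope_pw_affine.
  - apply continuous_on_glue with n0; [lra | |].
    + now apply continuous_on_ext with S.
    + apply continuous_on_ext with (power_envelope A q e K); auto.
      apply continuous_on_of_lipschitz. intros. apply power_envelope_lipschitz. split; nra.
  - apply strictly_increasing_on_glue with n0.
    + now apply strictly_increasing_on_ext with S.
    + apply strictly_increasing_on_ext with (power_envelope A q e K); auto.
      intros x y _ _ Hxy. now apply power_envelope_increasing.
  - apply concave_on_glue with n0 c; [lra | | |].
    + now apply concave_on_ext with S.
    + apply concave_on_ext with (power_envelope A q e K); auto.
      apply power_envelope_concave.
    + intros x Hx. rewrite (extension_left K n0) by lra.
      destruct (Rle_dec x n0).
      * rewrite extension_left by lra. pose proof (Hchord x n0 ltac:(lra) ltac:(lra) ltac:(lra)). lra.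
      * rewrite extension_right by lra.
        pose proof (envelope_le_all 1 x ltac:(lia) ltac:(lra)) as Hx1.
        rewrite first_line_eq in Hx1.
        assert (e <= c) by nra. nra.
  - intros x Hx. rewrite extension_left by lra. auto.
  - exact extension_mul.
Qed.

End Truncation.

Lemma extension_exists M : 0 < M ->
  exists (N0 : R) (T : R -> R), n0 < N0 /\ (forall x, 1 <= x <= n0 -> T x = S x) /\
    submultiplicative_on N0 T /\ M < T N0.
Proof.
  intro HM. destruct slope_bounds as [He [_ Heh]]. pose proof intercept_ge_1.
  destruct (pow_unbounded q (M + 1) ltac:(unfold q; lra)) as [k0 Hk0].
  pose proof (pow_lt e k0 He) as Hek0.
  set (N := n0 + 1 + M / e ^ k0).
  assert (HeN : M < e ^ k0 * N).
  { unfold N. assert (e ^ k0 * (M / e ^ k0) = M) by (field; lra). nra. }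
  assert (HnN : n0 < N) by (unfold N; pose proof (Rdiv_lt_0_compat M (e ^ k0) HM Hek0); lra).
  destruct (pow_unbounded q (power_line A q e 1 N) ltac:(unfold q; lra)) as [K HK].
  assert (Hcap : power_line A q e 1 N <= A * q ^ (K + 1)).
  { assert (q ^ K <= q ^ (K + 1)) by (apply Rle_pow; [lra | lia]).
    pose proof (pow_le q (K + 1) ltac:(lra)). nra. }
  exists N, (extension K). split; [exact HnN|]. split; [|split].
  - intros x Hx. apply extension_left. lra.
  - now apply extension_submultiplicative.
  - rewrite extension_right by lra.
    apply (power_envelope_gt A q e HA0 Hq1 He0 K M N k0); [lra | nra | | exact HeN].
    pose proof (pow_le q k0 ltac:(lra)). nra.
Qed.

End Extension.

Theorem lemma2p5 (n0 : R) (S : R -> R) :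
  2 <= n0 -> submultiplicative_on n0 S ->
  forall M : R, 0 < M ->
    exists (N0 : R) (T : R -> R),
      n0 < N0 /\
      (forall x, 1 <= x <= n0 -> T x = S x) /\
      submultiplicative_on N0 T /\
      M < T N0.
Proof.
  intros Hn0 HS.
  pose proof HS as [Hpl [_ [Hinc [Hconc _]]]].
  apply pw_affine_of_piecewise_linear in Hpl; [|lra].
  destruct (pw_affine_last _ _ _ Hpl) as [p [c [d [Hp Hlast]]]].
  assert (Hc : 0 < c).
  { pose proof (Hinc p n0 ltac:(lra) ltac:(lra) ltac:(lra)).
    rewrite !Hlast in H by lra. nra. }
  apply (extension_exists n0 c S Hn0 HS Hc).
  exact (concave_chord_ge_last_slope 1 p n0 c d S Hconc Hp Hlast).
Qed.
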